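(* Let $d\ge 3$ be odd, $n=\frac{d^2+1}{2}$, and consider the generalized bicycle code defined by $a(x)=1+x$, $b(x)=1+x^d$ in $R_n$ (a $[[d^2+1,2,d]]$ code). Let $$u(x)=1+x^d+x^{2d}+\cdots+x^{(\frac{d-1}{2}-1)d},\qquad v(x)=x^{n-\frac{d+1}{2}}+x^{n-\frac{d+1}{2}+1}+\cdots+x^{n-1},$$ $P_d(x)=1+x+\cdots+x^{d-1}$, and $P_d(x)^{-1}$ its inverse modulo $x^n-1$. Then $w_1=(u(x),v(x))$ and $w_2=(xv(x^d),u(x^d))$ lie in $C_1\setminus C_2$ and $w_1+w_2\notin C_2$, so the two logical qubits may be labelled so that the X-type operator $X^{w_1}$ implements logical $XI$ and $X^{w_2}$ implements logical $XX$; with this labelling, logical $IX$ is implemented by $X^{(1,P_d(x))}$ and by $X^{(P_d(x)^{-1},1)}$. Each of these statements remains true when the vector is replaced by any cyclic shift $x^i\cdot(\,\cdot\,,\,\cdot\,)$. The operators for $XI$ and $XX$ have weight $d$ and those for $IX$ have weight $d+1$, and each is of minimum weight among X-type operators implementing the same logical operator.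
   Context: $R_n=\mathbb{F}_2[x]/\langle x^n-1\rangle$; vectors of $\mathbb{F}_2^{2n}$ are pairs $(p(x),q(x))$ of elements of $R_n$ (first component on the first $n$ qubits, second on the last $n$), $x^i\cdot(p,q)=(x^ip,x^iq)$, and weight is the number of nonzero coefficients. For the generalized bicycle code defined by $a,b$: X-stabilizer space $C_2=\{(ca,cb):c\in R_n\}$ and $C_1=\{(p,q):pb+qa=0\}$ (X-type operators commuting with all Z-stabilizers $x^i(b(x^{-1}),a(x^{-1}))$). $X^{w}$ denotes the tensor product of Pauli $X$ on the support of $w$. X-type operators $X^w$, $X^{w'}$ with $w,w'\in C_1$ implement the same logical operator iff $w+w'\in C_2$, and $X^w$ is a non-trivial logical operator iff $w\in C_1\setminus C_2$. *)

(* R_n = F_2[x]/<x^n - 1> is modelled by polynomials over 'F_2,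
   two polynomials denoting the same element of R_n iff they are congruent
   modulo x^n - 1 (i.e. have the same remainder). *)
From HB Require Import structures.
From mathcomp Require Import all_boot all_order all_algebra.
Set Implicit Arguments. Unset Strict Implicit. Unset Printing Implicit Defensive.
Import GRing.Theory.
Local Open Scope ring_scope.


Definition red (n : nat) (p : {poly 'F_2}) : {poly 'F_2} := p %% ('X^n - 1).

Definition vec := ({poly 'F_2} * {poly 'F_2})%type.

Definition vadd (w w' : vec) : vec := (w.1 + w'.1, w.2 + w'.2).

Definition vshift (i : nat) (w : vec) : vec := ('X^i * w.1, 'X^i * w.2).

Definition inC2 (n : nat) (a b : {poly 'F_2}) (w : vec) : Prop :=
  exists c : {poly 'F_2}, red n (c * a) = red n w.1 /\ red n (c * b) = red n w.2.

Definition inC1 (n : nat) (a b : {poly 'F_2}) (w : vec) : Prop :=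
  red n (w.1 * b + w.2 * a) = 0.

Definition wtR (n : nat) (p : {poly 'F_2}) : nat :=
  #|[set i : 'I_n | (red n p)`_i != 0]|.

Definition wt (n : nat) (w : vec) : nat := (wtR n w.1 + wtR n w.2)%N.

Definition same_logical (n : nat) (a b : {poly 'F_2}) (w w' : vec) : Prop :=
  inC1 n a b w /\ inC1 n a b w' /\ inC2 n a b (vadd w w').

Definition min_weight_logical (n : nat) (a b : {poly 'F_2}) (w : vec) : Prop :=
  forall w' : vec, same_logical n a b w w' -> (wt n w <= wt n w')%N.

Definition bic_n (d : nat) : nat := ((d * d + 1) %/ 2)%N.
Definition bic_a : {poly 'F_2} := 1 + 'X.
Definition bic_b (d : nat) : {poly 'F_2} := 1 + 'X^d.
Definition bic_u (d : nat) : {poly 'F_2} :=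
  \sum_(i < (d - 1) %/ 2) 'X^(i * d).
Definition bic_v (d : nat) : {poly 'F_2} :=
  \sum_(i < (d + 1) %/ 2) 'X^(bic_n d - (d + 1) %/ 2 + i).
Definition Pd (d : nat) : {poly 'F_2} := \sum_(i < d) 'X^i.
Definition bic_w1 (d : nat) : vec := (bic_u d, bic_v d).
Definition bic_w2 (d : nat) : vec :=
  ('X * (bic_v d \Po 'X^d), bic_u d \Po 'X^d).

(* The logical class of X^w, for w = (p, q) in C_1, is its parity vector
   (p(1), q(1)) in F_2^2.  Elements of C_2 have parity zero since
   a(1) = b(1) = 0; conversely, as n is odd, the annihilator of x - 1 in R_n
   is spanned by the all-ones vector J, which pushes every parity-zero element
   of C_1 into C_2.  With m = (d - 1)/2, the vectors w_1 and w_2 have parities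
   (m, m + 1) and (m + 1, m), and both IX representatives have parity (1, 1);
   cyclic shifts change neither parity nor weight.

   For minimality, the pairing p q' + p' q of two elements of C_1 is
   annihilated by x - 1, hence is 0 or J.  If w has nonzero parity, its
   pairing with w_1 or with w_2 has parity 1, so it is J, and
   submultiplicativity of the weight gives n <= (m + 1) wt(w), that is
   wt(w) >= d.  For parity (1, 1) both halves have odd weight, so
   wt(w) >= d + 1.  The matching upper bounds count monomials: w_2 is the
   image of w_1 under the weight-nonincreasing map (p, q) |-> (x q(x^d), p(x^d)),
   and P_d has an explicit inverse with d monomials. *)

From HB Require Import structures.
From mathcomp Require Import all_boot all_order all_algebra.
From mathcomp Require Import ring zify.
Import GRing.Theory.
Local Open Scope ring_scope.
Set Implicit Arguments. Unset Strict Implicit. Unset Printing Implicit Defensive.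

Lemma pchar2_F2poly : (2 \in [pchar {poly 'F_2}])%N.
Proof. by rewrite pchar_poly pchar_Fp. Qed.

Lemma natr_F2 k : k%:R = (odd k)%:R :> 'F_2.
Proof. by rewrite -Fp_nat_mod // modn2. Qed.

Lemma F2_natr_neq0 (x : 'F_2) : x = (x != 0)%:R.
Proof. by case: x => -[|[|]] //= ?; apply/val_inj. Qed.

Lemma F2_ne0 (x : 'F_2) : x != 0 -> x = 1.
Proof. by rewrite {2}[x]F2_natr_neq0 => ->. Qed.

Lemma bic_aE : bic_a = 'X - 1.
Proof. by rewrite /bic_a oppr_pchar2 ?pchar2_F2poly // addrC. Qed.

Lemma bic_bE d : bic_b d = 'X^d - 1.
Proof. by rewrite /bic_b oppr_pchar2 ?pchar2_F2poly // addrC. Qed.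

Lemma dvdp_inv_unique (F : idomainType) (d p q q' : {poly F}) :
  d %| p * q - 1 -> d %| p * q' - 1 -> d %| q - q'.
Proof.
move=> inv_q inv_q'; have -> : q - q' = q' * (p * q - 1) - q * (p * q' - 1) by ring.
by rewrite dvdp_sub ?dvdp_mull.
Qed.

Section ModXnSub1.
Variables (F : fieldType) (n : nat).
Implicit Types p q h : {poly F}.

Lemma dvdp_Xn_sub1_XnM k : ('X^n - 1 : {poly F}) %| 'X^(n * k) - 1.
Proof. by rewrite exprM (subrX1 'X^n) dvdp_mulIl. Qed.

Lemma dvdp_Xn_sub1_Xn_mod e : ('X^n - 1 : {poly F}) %| 'X^e - 'X^(e %% n).
Proof.
rewrite {1}(divn_eq e n) exprD mulnC -{2}['X^(e %% n)]mul1r -mulrBl.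
exact/dvdp_mulr/dvdp_Xn_sub1_XnM.
Qed.

Lemma dvdp_Xn_sub1_comp k p : 'X^n - 1 %| p -> 'X^n - 1 %| p \Po 'X^k.
Proof.
move/(dvdp_comp_poly ('X^k)); apply: dvdp_trans.
by rewrite rmorphB rmorph1 /= comp_Xn_poly -exprM mulnC dvdp_Xn_sub1_XnM.
Qed.

Lemma horner1_cong p q : 'X^n - 1 %| p - q -> p.[1] = q.[1].
Proof.
case/dvdpP=> r /(congr1 (horner^~ 1)) /eqP.
by rewrite hornerM !hornerE expr1n subrr mulr0 subr_eq0 => /eqP.
Qed.

Definition ones : {poly F} := \sum_(i < n) 'X^i.

Lemma horner1_sum_Xn k (f : 'I_k -> nat) : (\sum_(i < k) 'X^(f i) : {poly F}).[1] = k%:R.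
Proof.
rewrite horner_sum (eq_bigr (fun=> 1)) => [|i _]; first by rewrite sumr_const card_ord.
by rewrite hornerXn expr1n.
Qed.

Lemma dvdp_Xsub1_ann h : n%:R != 0 :> F -> 'X^n - 1 %| ('X - 1) * h ->
  'X^n - 1 %| h - (h.[1] / n%:R)%:P * ones.
Proof.
move=> n_neq0; rewrite subrX1 dvdp_mul2l -?polyC1 ?polyXsubC_eq0 //.
case/dvdpP=> s ->; rewrite hornerM horner1_sum_Xn mulfK // -mulrBl.
by apply: dvdp_mul => //; rewrite dvdp_XsubCl /root !hornerE subrr.
Qed.
End ModXnSub1.

Lemma red_eqP n p q : reflect (red n p = red n q) ('X^n - 1 %| p - q).
Proof.
rewrite /red; apply: (iffP (modp_eq0P _ _)) => [|e].
  by rewrite modpD modpN => /eqP; rewrite subr_eq0 => /eqP.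
by rewrite modpD modpN e subrr.
Qed.

Lemma red_horner1 n p : (red n p).[1] = p.[1].
Proof. by apply/(@horner1_cong _ n)/red_eqP; rewrite /red modp_id. Qed.

Section Weight.
Variable n : nat.
Hypothesis n_gt0 : (0 < n)%N.
Implicit Types (p q : {poly 'F_2}) (w : vec).

Lemma red_eq1P p : reflect (red n p = 1) ('X^n - 1 %| p - 1).
Proof.
have red1 : red n 1 = 1.
  by rewrite /red modp_small // size_Xn_sub_1 // size_poly1 ltnS.
by rewrite -{1}red1; apply: red_eqP.
Qed.

Lemma wtR_cong p q : 'X^n - 1 %| p - q -> wtR n p = wtR n q.
Proof. by move/red_eqP=> e; rewrite /wtR e. Qed.

Lemma size_red p : (size (red n p) <= n)%N.
Proof.
by rewrite -ltnS -(size_Xn_sub_1 'F_2 n_gt0) ltn_modp -size_poly_gt0 size_Xn_sub_1.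
Qed.

Lemma red_support p : red n p = \sum_(i < n | (red n p)`_i != 0) 'X^i.
Proof.
set r := red n p; rewrite {1}(_ : r = \poly_(i < n) r`_i).
  rewrite poly_def [RHS]big_mkcond /=; apply: eq_bigr => i _.
  by rewrite {1}[r`_i]F2_natr_neq0; case: (_ != 0); rewrite ?scale1r ?scale0r.
apply/polyP => k; rewrite coef_poly; case: ltnP => // nk.
by rewrite nth_default // (leq_trans (size_red p) nk).
Qed.

Lemma red_Xn e : red n 'X^e = 'X^(e %% n).
Proof.
rewrite -[RHS](@modp_small _ _ ('X^n - 1)); last first.
  by rewrite size_polyXn size_Xn_sub_1 // ltnS ltn_pmod.
exact/red_eqP/dvdp_Xn_sub1_Xn_mod.
Qed.

Lemma wtR_Xn e : wtR n 'X^e = 1%N.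
Proof.
rewrite /wtR red_Xn -(cards1 (Ordinal (ltn_pmod e n_gt0))); apply: eq_card => i.
rewrite !inE coefXn; case: (i =P Ordinal _) => [-> | ne]; first by rewrite /= eqxx oner_eq0.
suff /negbTE-> : nat_of_ord i != (e %% n)%N by rewrite eqxx.
by apply: contra_notN ne => /eqP ie; apply: val_inj.
Qed.

Lemma wtR_add p q : (wtR n (p + q) <= wtR n p + wtR n q)%N.
Proof.
rewrite /wtR /red modpD; apply: leq_trans (leq_card_setU _ _).1.
apply/subset_leq_card/subsetP => i; rewrite !inE coefD.
by apply: contraR; rewrite negb_or !negbK => /andP[/eqP-> /eqP->]; rewrite addr0.
Qed.

Lemma wtR_sum I (r : seq I) (P : pred I) (F : I -> {poly 'F_2}) :
  (wtR n (\sum_(i <- r | P i) F i) <= \sum_(i <- r | P i) wtR n (F i))%N.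
Proof.
apply: (big_ind2 (fun p k => wtR n p <= k)%N) => [|p1 k1 p2 k2 le1 le2|//].
  by rewrite leqn0 cards_eq0; apply/eqP/setP => i; rewrite !inE /red mod0p coef0 eqxx.
exact: leq_trans (wtR_add _ _) (leq_add le1 le2).
Qed.

Lemma wtR_sum_Xn_le k (f : 'I_k -> nat) : (wtR n (\sum_(i < k) 'X^(f i)) <= k)%N.
Proof.
apply: leq_trans (wtR_sum _ _ _) _.
by rewrite (eq_bigr (fun=> 1%N)) => [|i _]; rewrite ?sum1_card ?card_ord ?wtR_Xn.
Qed.

Lemma dvdp_sub_red p : 'X^n - 1 %| p - red n p.
Proof. by rewrite {1}(divp_eq p ('X^n - 1)) addrK dvdp_mull. Qed.

Lemma wtR_mul p q : (wtR n (p * q) <= wtR n p * wtR n q)%N.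
Proof.
rewrite (@wtR_cong _ (red n p * red n q)); last first.
  by apply/red_eqP; rewrite /red modp_mul [_ %% _ * q]mulrC modp_mul mulrC.
rewrite {1}red_support {1}(red_support q) mulr_suml.
apply: leq_trans (wtR_sum _ _ _) _.
rewrite [X in (_ <= X * _)%N]/wtR -sum1dep_card big_distrl /=.
apply: leq_sum => i _; rewrite mul1n mulr_sumr [X in (_ <= X)%N]/wtR -sum1dep_card.
apply: leq_trans (wtR_sum _ _ _) _.
by rewrite (eq_bigr (fun=> 1%N)) // => j _; rewrite -exprD wtR_Xn.
Qed.

Lemma wtR_Xn_mul e p : wtR n ('X^e * p) = wtR n p.
Proof.
have le_wtR k q : (wtR n ('X^k * q) <= wtR n q)%N.
  by apply: leq_trans (wtR_mul _ _) _; rewrite wtR_Xn mul1n.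
apply/eqP; rewrite eqn_leq le_wtR /=.
have e_inv : 'X^n - 1 %| 'X^(n.-1 * e) * ('X^e * p) - p.
  rewrite mulrA -exprD -mulSnr prednK // -[X in _ * _ - X]mul1r -mulrBl.
  exact/dvdp_mulr/dvdp_Xn_sub1_XnM.
by rewrite -(wtR_cong e_inv) le_wtR.
Qed.

Lemma wt_vshift i w : wt n (vshift i w) = wt n w.
Proof. by rewrite /wt /= !wtR_Xn_mul. Qed.

Lemma wtR_comp_Xn_le k p : (wtR n (p \Po 'X^k) <= wtR n p)%N.
Proof.
have cong : 'X^n - 1 %| (p \Po 'X^k) - (red n p \Po 'X^k).
  by rewrite -rmorphB dvdp_Xn_sub1_comp ?dvdp_sub_red.
rewrite (wtR_cong cong) red_support raddf_sum; apply: leq_trans (wtR_sum _ _ _) _.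
rewrite [X in (_ <= X)%N]/wtR -sum1dep_card.
by rewrite (eq_bigr (fun=> 1%N)) // => i _; rewrite /= comp_Xn_poly -exprM wtR_Xn.
Qed.

Lemma wtR_horner1 p : (wtR n p)%:R = p.[1].
Proof.
rewrite -(red_horner1 n) red_support horner_sum (eq_bigr (fun=> 1)) => [|i _].
  by rewrite /wtR -sum1dep_card natr_sum.
by rewrite hornerXn expr1n.
Qed.

Lemma wtR_ones : wtR n (ones _ n) = n.
Proof.
have onesE : ones _ n = \poly_(i < n) (1 : 'F_2).
  by rewrite poly_def; apply: eq_bigr => i _; rewrite scale1r.
rewrite /wtR /red modp_small; last by rewrite onesE size_Xn_sub_1 // ltnS size_poly.
rewrite -[RHS]card_ord -cardsT; apply: eq_card => i.
by rewrite !inE onesE coef_poly ltn_ord oner_eq0.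
Qed.
End Weight.

Definition parity (w : vec) : 'F_2 * 'F_2 := (w.1.[1], w.2.[1]).

Definition pairing (w w' : vec) : {poly 'F_2} := w.1 * w'.2 + w'.1 * w.2.

Lemma parity_vadd w w' : parity (vadd w w') = parity w + parity w'.
Proof. by rewrite /parity /= !hornerD. Qed.

Lemma parity_vshift i w : parity (vshift i w) = parity w.
Proof. by rewrite /parity /= !hornerM hornerXn expr1n !mul1r. Qed.

Lemma pairing_horner1 w w' :
  (pairing w w').[1] = w.1.[1] * w'.2.[1] + w'.1.[1] * w.2.[1].
Proof. by rewrite /pairing hornerD !hornerM. Qed.

Lemma F2pair_add_eq0 (x y : 'F_2 * 'F_2) : (x + y == 0) = (x == y).
Proof.
rewrite -[RHS]subr_eq0; case: y => y1 y2.
by congr (x + (_, _) == 0); rewrite oppr_pchar2 ?pchar_Fp.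
Qed.

Lemma bic_a_horner1 : bic_a.[1] = 0.
Proof. by rewrite bic_aE !hornerE subrr. Qed.

Section LogicalClasses.
Variables (n : nat) (b : {poly 'F_2}).
Hypotheses (n_odd : odd n) (b1 : b.[1] = 0).
Local Notation inC1 := (inC1 n bic_a b).
Local Notation inC2 := (inC2 n bic_a b).
Local Notation same_logical := (same_logical n bic_a b).
Implicit Types w : vec.

Let n_gt0 := odd_gt0 n_odd.

Lemma dvdp_Xsub1_ann_F2 (h : {poly 'F_2}) : 'X^n - 1 %| ('X - 1) * h ->
  'X^n - 1 %| h - h.[1]%:P * ones _ n.
Proof.
have n_neq0 : n%:R != 0 :> 'F_2 by rewrite natr_F2 n_odd oner_eq0.
by move/(dvdp_Xsub1_ann n_neq0); rewrite natr_F2 n_odd divr1.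
Qed.

Lemma inC1_vshift i w : inC1 w -> inC1 (vshift i w).
Proof.
rewrite /inC1 /red /= => /modp_eq0P dv; apply/modp_eq0P.
by rewrite -!mulrA -mulrDr dvdp_mull.
Qed.

Lemma inC1_vadd w w' : inC1 w -> inC1 w' -> inC1 (vadd w w').
Proof. by rewrite /inC1 /red /= => e e'; rewrite !mulrDl addrACA modpD e e' addr0. Qed.

Lemma parity_inC2 w : inC2 w -> parity w = 0.
Proof.
case=> c [e1 e2]; rewrite /parity -(red_horner1 n w.1) -(red_horner1 n w.2).
by rewrite -e1 -e2 !red_horner1 !hornerM bic_a_horner1 b1 !mulr0.
Qed.

Lemma parity_neq0_notC2 w : parity w != 0 -> ~ inC2 w.
Proof. by move=> nz /parity_inC2 par0; rewrite par0 eqxx in nz. Qed.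

Lemma inC2_parity0 w : inC1 w -> parity w = 0 -> inC2 w.
Proof.
case: w => p q; rewrite /inC1 /parity /= => /modp_eq0P Hpq [p1 q1].
have /dvdpP[c pE] : 'X - 1 %| p by rewrite -polyC1 dvdp_XsubCl /root p1.
exists c; rewrite bic_aE -pE; split => //=; apply/red_eqP.
have := @dvdp_Xsub1_ann_F2 (c * b + q).
rewrite hornerD hornerM b1 q1 mulr0 addr0 mul0r subr0.
rewrite [- q](oppr_pchar2 pchar2_F2poly); apply.
by move: Hpq; rewrite pE bic_aE; congr (_ %| _); ring.
Qed.

Lemma same_logicalP w w' : inC1 w -> inC1 w' ->
  same_logical w w' <-> parity w = parity w'.
Proof.
move=> C1w C1w'; split=> [[_ [_ /parity_inC2]] | eq_par].
  by rewrite parity_vadd => /eqP; rewrite F2pair_add_eq0 => /eqP.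
do 2!split=> //; apply: inC2_parity0; first exact: inC1_vadd.
by apply/eqP; rewrite parity_vadd F2pair_add_eq0 eq_par.
Qed.

Lemma pairing_ann w w' : inC1 w -> inC1 w' ->
  'X^n - 1 %| pairing w w' - (pairing w w').[1]%:P * ones _ n.
Proof.
rewrite /inC1 /red => /modp_eq0P C1w /modp_eq0P C1w'.
apply: dvdp_Xsub1_ann_F2.
have -> : ('X - 1) * pairing w w' =
    w.1 * (w'.1 * b + w'.2 * bic_a) - w'.1 * (w.1 * b + w.2 * bic_a).
  by rewrite /pairing -[w'.1 * w.2](oppr_pchar2 pchar2_F2poly) bic_aE; ring.
by rewrite dvdp_sub ?dvdp_mull.
Qed.

Lemma pairing_weight_bound w w' : inC1 w -> inC1 w' -> (pairing w w').[1] != 0 ->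
  (n <= wtR n w.1 * wtR n w'.2 + wtR n w'.1 * wtR n w.2)%N.
Proof.
move=> C1w C1w' /F2_ne0 h1.
have := pairing_ann C1w C1w'; rewrite h1 polyC1 mul1r => /wtR_cong wt_eq.
rewrite -{1}(wtR_ones n_gt0) -wt_eq.
by apply: leq_trans (wtR_add _ _ _) (leq_add _ _); apply: wtR_mul.
Qed.

Lemma vshift_min_weight k w : inC1 w -> (wt n w <= k)%N ->
    (forall w', inC1 w' -> parity w' = parity w -> (k <= wt n w')%N) ->
  forall i, [/\ same_logical (vshift i w) w, wt n (vshift i w) = k
              & min_weight_logical n bic_a b (vshift i w)].
Proof.
move=> C1w wt_le wt_ge i.
have wtE : wt n (vshift i w) = k.
  by rewrite wt_vshift //; apply/eqP; rewrite eqn_leq wt_le wt_ge.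
split=> //; first exact/(same_logicalP (inC1_vshift i C1w) C1w)/parity_vshift.
move=> w' sl; have [_ [C1w' _]] := sl.
move/(same_logicalP (inC1_vshift i C1w) C1w'): sl.
by rewrite wtE parity_vshift => /esym; apply: wt_ge.
Qed.
End LogicalClasses.

Definition bic_sigma d (w : vec) : vec := ('X * (w.2 \Po 'X^d), w.1 \Po 'X^d).

Lemma bic_w2E d : bic_w2 d = bic_sigma d (bic_w1 d).
Proof. by []. Qed.

Lemma parity_sigma d w : parity (bic_sigma d w) = (w.2.[1], w.1.[1]).
Proof. by rewrite /parity /= hornerM hornerX mul1r !horner_comp hornerXn expr1n. Qed.

Lemma bic_b_horner1 d : (bic_b d).[1] = 0.
Proof. by rewrite bic_bE !hornerE expr1n subrr. Qed.

Lemma F2_pairing_cases (c x y : 'F_2) : (x, y) != 0 ->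
  (x * (c + 1) + c * y != 0) || (x * c + (c + 1) * y != 0).
Proof. by move: c x y; do 3!case=> -[|[|[]]] // ?. Qed.

Lemma F2_pair_succ_neq0 (c : 'F_2) : ((c, c + 1) != 0) && ((c + 1, c) != 0).
Proof. by case: c => -[|[|[]]] // ?. Qed.

Section GBCode.
Variable m : nat.
Local Notation d := m.*2.+1.
Local Notation n := (bic_n d).
Local Notation b := (bic_b d).
Local Notation inC1 := (inC1 n bic_a b).

Lemma bic_nE : n = (m * d + m).+1.
Proof. rewrite /bic_n; lia. Qed.

Lemma bic_n_odd : odd n.
Proof.
have -> : n = (m * m + m).*2.+1 by rewrite bic_nE; nia.
by rewrite /= odd_double.
Qed.

Let n_gt0 := odd_gt0 bic_n_odd.

Lemma bic_n_double : (d * d).+1 = n.*2.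
Proof. rewrite bic_nE; lia. Qed.

Lemma half_d : ((d - 1) %/ 2 = m)%N /\ ((d + 1) %/ 2 = m.+1)%N.
Proof. lia. Qed.

Lemma bic_uE : bic_u d = \sum_(i < m) ('X^d) ^+ i.
Proof. by rewrite /bic_u half_d.1; apply: eq_bigr => i _; rewrite -exprM mulnC. Qed.

Lemma bic_vE : bic_v d = 'X^(m * d) * \sum_(i < m.+1) 'X^i.
Proof.
rewrite /bic_v half_d.2 mulr_sumr; apply: eq_bigr => i _.
by rewrite -exprD; congr 'X^_; rewrite bic_nE; lia.
Qed.

Lemma inC1_w1 : inC1 (bic_w1 d).
Proof.
rewrite /inC1 /red /=; apply/modp_eq0P.
suff -> : bic_u d * b + bic_v d * bic_a = 'X^n - 1 by [].
rewrite bic_uE bic_vE bic_bE bic_aE [_ * ('X^d - 1)]mulrC -subrX1.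
rewrite -mulrA [_ * ('X - 1)]mulrC -subrX1 -exprM (mulnC _ m) bic_nE -addnS exprD.
by ring.
Qed.

Lemma inC1_sigma w : inC1 w -> inC1 (bic_sigma d w).
Proof.
rewrite /inC1 /red /= => /modp_eq0P /(@dvdp_Xn_sub1_comp _ _ d) C1w; apply/modp_eq0P.
rewrite /bic_b /bic_a !(rmorphD, rmorphM, rmorph1) /= comp_polyX !comp_Xn_poly in C1w.
set p := w.1 \Po 'X^d in C1w *; set q := w.2 \Po 'X^d in C1w *.
have XdX : ('X^d) ^+ d * 'X = 'X^(n * 2) :> {poly 'F_2}.
  by rewrite -exprM -exprSr bic_n_double muln2.
have -> : 'X * q * b + p * bic_a =
    'X * (p * (1 + ('X^d) ^+ d) + q * b) - p * (('X^d) ^+ d * 'X - 1).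
  by rewrite /bic_b /bic_a; ring.
by rewrite XdX dvdp_sub ?dvdp_mull ?dvdp_Xn_sub1_XnM.
Qed.

Lemma wt_sigma_le w : (wt n (bic_sigma d w) <= wt n w)%N.
Proof.
rewrite /wt /= (wtR_Xn_mul n_gt0 1) addnC.
by apply: leq_add; apply: wtR_comp_Xn_le.
Qed.

Lemma parity_w1 : parity (bic_w1 d) = (m%:R, m%:R + 1).
Proof. by rewrite /parity /= !horner1_sum_Xn half_d.1 half_d.2 natr1. Qed.

Lemma parity_w2 : parity (bic_w2 d) = (m%:R + 1, m%:R).
Proof. by rewrite bic_w2E parity_sigma; case: parity_w1 => -> ->. Qed.

Lemma parity_w1_neq0 : parity (bic_w1 d) != 0.
Proof. by rewrite parity_w1; case/andP: (F2_pair_succ_neq0 m%:R). Qed.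

Lemma parity_w2_neq0 : parity (bic_w2 d) != 0.
Proof. by rewrite parity_w2; case/andP: (F2_pair_succ_neq0 m%:R). Qed.

Lemma wt_w1_le : (wt n (bic_w1 d) <= d)%N.
Proof.
apply: leq_trans (leq_add (wtR_sum_Xn_le n_gt0 _) (wtR_sum_Xn_le n_gt0 _)) _.
by rewrite half_d.1 half_d.2 addnS addnn.
Qed.

Lemma inC1_w2 : inC1 (bic_w2 d).
Proof. by rewrite bic_w2E; apply/inC1_sigma/inC1_w1. Qed.

Lemma wt_w2_le : (wt n (bic_w2 d) <= d)%N.
Proof. exact: leq_trans (wt_sigma_le _) wt_w1_le. Qed.

(* Since [n = (m + 1) d - m], a pairing bound [n <= (m + 1) (x + y)] forces [d <= x + y]. *)
Lemma pairing_bound_weight x y k k' : (k <= m.+1)%N -> (k' <= m.+1)%N ->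
  (n <= x * k + k' * y)%N -> (d <= x + y)%N.
Proof. by rewrite bic_nE; nia. Qed.

Lemma wt_lower_bound w : inC1 w -> parity w != 0 -> (d <= wt n w)%N.
Proof.
case: w => p q C1w par_nz; have [u1 v1] := parity_w1; have [A1 B1] := parity_w2.
have u_le : (wtR n (bic_u d) <= m.+1)%N.
  by apply: leqW; rewrite -[X in (_ <= X)%N]half_d.1 wtR_sum_Xn_le.
have v_le : (wtR n (bic_v d) <= m.+1)%N.
  by rewrite -[X in (_ <= X)%N]half_d.2 wtR_sum_Xn_le.
case/orP: (F2_pairing_cases m%:R par_nz) => [h1 | h2].
  have := pairing_weight_bound bic_n_odd C1w inC1_w1.
  by rewrite pairing_horner1 /= u1 v1 => /(_ h1); apply: pairing_bound_weight.
have := pairing_weight_bound bic_n_odd C1w inC1_w2.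
rewrite pairing_horner1 /= A1 B1 => /(_ h2); apply: pairing_bound_weight.
  by rewrite (leq_trans (wtR_comp_Xn_le _ _ _)).
by rewrite (wtR_Xn_mul n_gt0 1) (leq_trans (wtR_comp_Xn_le _ _ _)).
Qed.

Lemma wt_lower_bound_odd w : inC1 w -> parity w = (1, 1) -> (d < wt n w)%N.
Proof.
move=> C1w par1; rewrite ltn_neqAle wt_lower_bound ?par1 // andbT.
have odd_wtR p : p.[1] = 1 -> odd (wtR n p).
  by rewrite -(wtR_horner1 n_gt0) natr_F2; case: odd => // /eqP; rewrite eq_sym oner_eq0.
case: w C1w par1 => p q _ [/odd_wtR p1 /odd_wtR q1].
by apply/negP => /eqP/(congr1 odd); rewrite /wt oddD p1 q1 /= odd_double.
Qed.

Lemma Pd_horner1 : (Pd d).[1] = 1.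
Proof. by rewrite horner1_sum_Xn natr_F2 /= odd_double. Qed.

(* [(x - 1) P_d bic_Pinv = (x^d - 1) bic_Pinv] telescopes to [x - 1] modulo
   [x^n - 1], because [(m + 1) d + 1 = n + m + 1] and [m d + m + 1 = n]. *)
Definition bic_Pinv : {poly 'F_2} :=
  \sum_(i < m.+1) 'X^((i * d).+1) + \sum_(i < m) 'X^(m.+1 + i * d).

Lemma bic_PinvE : bic_Pinv =
  'X * \sum_(i < m.+1) ('X^d) ^+ i + 'X^(m.+1) * \sum_(i < m) ('X^d) ^+ i.
Proof.
by rewrite /bic_Pinv !mulr_sumr; congr (_ + _); apply: eq_bigr => i _;
  rewrite -exprM -?exprS -?exprD mulnC.
Qed.

Lemma Pd_Pinv : 'X^n - 1 %| Pd d * bic_Pinv - 1.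
Proof.
have := @dvdp_Xsub1_ann_F2 _ bic_n_odd (Pd d * bic_Pinv - 1).
rewrite hornerD hornerN hornerM Pd_horner1 mul1r hornerD !horner1_sum_Xn -natrD.
rewrite hornerC natr_F2 addSn addnn /= odd_double subrr mul0r subr0; apply.
have e1 : 'X * ('X^d) ^+ m.+1 = 'X^n * 'X^(m.+1) :> {poly 'F_2}.
  by rewrite -exprM -exprS -exprD bic_nE; congr 'X^_; lia.
have e2 : 'X^(m.+1) * ('X^d) ^+ m = 'X^n :> {poly 'F_2}.
  by rewrite -exprM -exprD bic_nE; congr 'X^_; lia.
have -> : ('X - 1) * (Pd d * bic_Pinv - 1) = ('X^n - 1) * ('X^(m.+1) + 1) - ('X - 1) *+ 2.
  rewrite mulrBr mulr1 mulrA -subrX1 bic_PinvE mulrDr.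
  rewrite [_ * ('X * _)]mulrCA [_ * ('X^(m.+1) * _)]mulrCA -!subrX1.
  by rewrite !mulrBr !mulr1 e1 e2; ring.
by rewrite (mulrn_pchar pchar2_F2poly) subr0 dvdp_mulIl.
Qed.

Lemma wtR_Pinv_le : (wtR n bic_Pinv <= d)%N.
Proof.
apply: leq_trans (wtR_add _ _ _) _.
apply: leq_trans (leq_add (wtR_sum_Xn_le n_gt0 _) (wtR_sum_Xn_le n_gt0 _)) _.
by rewrite addSn addnn.
Qed.

Lemma inC1_IX : inC1 (1%R, Pd d).
Proof.
rewrite /inC1 /= bic_bE bic_aE /Pd subrX1 mul1r mulrC.
by rewrite (addrr_pchar2 pchar2_F2poly) /red mod0p.
Qed.

Lemma inC1_IX' P : 'X^n - 1 %| Pd d * P - 1 -> inC1 (P, 1%R).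
Proof.
move=> inv; rewrite /inC1 /red /=; apply/modp_eq0P.
have -> : P * b + 1 * bic_a = ('X - 1) * (Pd d * P - 1) + ('X - 1) *+ 2.
  by rewrite bic_bE bic_aE /Pd subrX1; ring.
by rewrite (mulrn_pchar pchar2_F2poly) addr0 dvdp_mull.
Qed.

Lemma parity_IX : parity (1%R, Pd d) = (1, 1).
Proof. by rewrite /parity /= Pd_horner1 hornerC. Qed.

Lemma parity_IX' P : 'X^n - 1 %| Pd d * P - 1 -> parity (P, 1%R) = (1, 1).
Proof.
move/horner1_cong; rewrite hornerM Pd_horner1 mul1r => P1.
by rewrite /parity /= P1 hornerC.
Qed.

Lemma wtR1 : wtR n 1 = 1%N.
Proof. by rewrite -(expr0 'X) wtR_Xn. Qed.

Lemma wt_IX_le : (wt n (1%R, Pd d) <= d.+1)%N.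
Proof. by rewrite /wt /= wtR1 add1n ltnS wtR_sum_Xn_le. Qed.

Lemma wt_IX'_le P : 'X^n - 1 %| Pd d * P - 1 -> (wt n (P, 1%R) <= d.+1)%N.
Proof.
move=> inv; rewrite /wt /= wtR1 addn1 ltnS.
by rewrite (wtR_cong (dvdp_inv_unique inv Pd_Pinv)) wtR_Pinv_le.
Qed.

Lemma parity_w12 : parity (vadd (bic_w1 d) (bic_w2 d)) = (1, 1).
Proof.
rewrite parity_vadd parity_w1 parity_w2 /=.
by congr (_, _); rewrite /= ?[_ + 1 + _]addrC addrA addrr_pchar2 ?add0r ?pchar_Fp.
Qed.

Local Notation same_logical := (same_logical n bic_a b).
Local Notation min_weight_logical := (min_weight_logical n bic_a b).

Lemma vshift_min_weight_parity_neq0 w :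
    inC1 w -> parity w != 0 -> (wt n w <= d)%N ->
  forall i, [/\ same_logical (vshift i w) w, wt n (vshift i w) = d
              & min_weight_logical (vshift i w)].
Proof.
move=> C1w par_nz wt_le.
apply: (vshift_min_weight bic_n_odd (bic_b_horner1 d) C1w wt_le) => w' C1w' par'.
by apply: wt_lower_bound C1w' _; rewrite par'.
Qed.

Lemma vshift_min_weight_parity11 w :
    inC1 w -> parity w = (1, 1) -> (wt n w <= d.+1)%N ->
  forall i, [/\ same_logical (vshift i w) w, wt n (vshift i w) = d.+1
              & min_weight_logical (vshift i w)].
Proof.
move=> C1w par1 wt_le.
apply: (vshift_min_weight bic_n_odd (bic_b_horner1 d) C1w wt_le) => w' C1w' par'.
by apply: wt_lower_bound_odd C1w' _; rewrite par'.
Qed.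
End GBCode.

Unset Implicit Arguments.

Theorem theorem5 (d : nat) (hd3 : (3 <= d)%N) (hodd : odd d) :
  let n := bic_n d in
  let a := bic_a in
  let b := bic_b d in
  let w1 := bic_w1 d in
  let w2 := bic_w2 d in
  let wIX := (1 : {poly 'F_2}, Pd d) in
  (* w1, w2 are non-trivial logicals, and w1 + w2 is non-trivial *)
  (inC1 n a b w1 /\ ~ inC2 n a b w1) /\
  (inC1 n a b w2 /\ ~ inC2 n a b w2) /\
  ~ inC2 n a b (vadd w1 w2) /\
  (* P_d is invertible modulo x^n - 1 *)
  (exists q : {poly 'F_2}, red n (Pd d * q) = 1) /\
  (forall Pinv : {poly 'F_2}, red n (Pd d * Pinv) = 1 ->
     let wIX' := (Pinv, 1 : {poly 'F_2}) in
     (* IX = XI * XX is implemented by (1, P_d) and by (P_d^{-1}, 1) *)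
     same_logical n a b wIX (vadd w1 w2) /\
     same_logical n a b wIX' (vadd w1 w2) /\
     (* every cyclic shift implements the same logical operator *)
     (forall i : nat,
        same_logical n a b (vshift i w1) w1 /\
        same_logical n a b (vshift i w2) w2 /\
        same_logical n a b (vshift i wIX) wIX /\
        same_logical n a b (vshift i wIX') wIX') /\
     (* weights and minimality, also for all cyclic shifts *)
     (forall i : nat,
        wt n (vshift i w1) = d /\ wt n (vshift i w2) = d /\
        wt n (vshift i wIX) = d.+1 /\ wt n (vshift i wIX') = d.+1 /\
        min_weight_logical n a b (vshift i w1) /\
        min_weight_logical n a b (vshift i w2) /\
        min_weight_logical n a b (vshift i wIX) /\
        min_weight_logical n a b (vshift i wIX'))).
Proof.
have [m ->] : exists m, d = m.*2.+1 by exists d./2; rewrite -[LHS]odd_double_half hodd.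
move=> n a b w1 w2 wIX.
have [n_odd b1] := (bic_n_odd m, bic_b_horner1 m.*2.+1).
have C1w12 := inC1_vadd (inC1_w1 m) (inC1_w2 m).
split; first by split; [exact: inC1_w1 | exact/(parity_neq0_notC2 b1)/parity_w1_neq0].
split; first by split; [exact: inC1_w2 | exact/(parity_neq0_notC2 b1)/parity_w2_neq0].
split; first by apply: (parity_neq0_notC2 b1); rewrite parity_w12.
split; first by exists (bic_Pinv m); apply/(red_eq1P (odd_gt0 n_odd))/Pd_Pinv.
move=> Pinv /(red_eq1P (odd_gt0 n_odd)) inv wIX'.
split; first by apply/(same_logicalP n_odd b1 (inC1_IX m) C1w12); rewrite parity_IX parity_w12.
split.
  apply/(same_logicalP n_odd b1 (inC1_IX' inv) C1w12).
  by rewrite (parity_IX' inv) parity_w12.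
have rep1 := vshift_min_weight_parity_neq0 (inC1_w1 m) (parity_w1_neq0 m) (wt_w1_le m).
have rep2 := vshift_min_weight_parity_neq0 (inC1_w2 m) (parity_w2_neq0 m) (wt_w2_le m).
have rep3 := vshift_min_weight_parity11 (inC1_IX m) (parity_IX m) (wt_IX_le m).
have rep4 := vshift_min_weight_parity11 (inC1_IX' inv) (parity_IX' inv) (wt_IX'_le inv).
split=> i; case: (rep1 i) (rep2 i) (rep3 i) (rep4 i) => ? ? ? [? ? ?] [? ? ?] [? ? ?].
  by repeat first [assumption | split].
by repeat first [assumption | split].
Qed.
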